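(* For every $k\in\mathbb{N}$, $$D_{\mathbb{R},4k}\ge\left[\sum_{j=0}^{2k}|B_j|^{\frac{8k}{4k+1}}\right]^{\frac{4k+1}{8k}},\qquad B_j=\sum_{\ell=0}^{\lfloor j/2\rfloor}\frac{k!\,(-3)^{j-2\ell}}{\ell!\,(j-2\ell)!\,(k-j+\ell)!}\ (j=0,\dots,2k),$$ with terms having $k-j+\ell<0$ interpreted as $0$; the $B_j$ are the coefficients of $(x^4+y^4-3x^2y^2)^k$.
   Context: $\ell_\infty^n$ is $\mathbb{R}^n$ with the sup norm; for a polynomial $P$ on $\ell_\infty^n$, $\|P\|=\sup_{x\in[-1,1]^n}|P(x)|$. $D_{\mathbb{R},m}$ is the smallest constant $D$ such that for every $N$ and every real $m$-homogeneous polynomial $P(x)=\sum_{|\alpha|=m}a_\alpha x^\alpha$ on $\ell_\infty^N$, $\big(\sum_{|\alpha|=m}|a_\alpha|^{\frac{2m}{m+1}}\big)^{\frac{m+1}{2m}}\le D\|P\|$. $\lfloor h\rfloor$ is the integer part. *)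

From Stdlib Require Import Reals List Arith.
Import ListNotations.
Open Scope R_scope.

(* Real power x^y for x >= 0 with the convention 0^y = 0 (y > 0).
   (Stdlib's Rpower 0 y = 1, which is wrong for our use.) *)
Definition rpow (x y : R) : R := if Rle_dec x 0 then 0 else Rpower x y.

(* All multi-indices alpha in N^n with |alpha| = m, as lists of length n
   (each listed exactly once). *)
Fixpoint multi_indices (n m : nat) : list (list nat) :=
  match n with
  | O => if Nat.eqb m 0 then [[]] else []
  | S n' => flat_map (fun i => map (cons i) (multi_indices n' (m - i)))
                     (seq 0 (S m))
  end.

Fixpoint monom_from (x : nat -> R) (i : nat) (alpha : list nat) : R :=
  match alpha with
  | [] => 1
  | a :: al => (x i) ^ a * monom_from x (S i) al
  end.

Definition monom (x : nat -> R) (alpha : list nat) : R := monom_from x 0 alpha.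

Definition sumR (l : list R) : R := fold_right Rplus 0 l.

Definition hpoly_eval (N m : nat) (a : list nat -> R) (x : nat -> R) : R :=
  sumR (map (fun alpha => a alpha * monom x alpha) (multi_indices N m)).

Definition in_cube (N : nat) (x : nat -> R) : Prop :=
  forall i, (i < N)%nat -> -1 <= x i <= 1.

Definition hpoly_norm_is (N m : nat) (a : list nat -> R) (nrm : R) : Prop :=
  is_lub (fun v => exists x, in_cube N x /\ v = Rabs (hpoly_eval N m a x)) nrm.

Definition BH_coef_norm (N m : nat) (a : list nat -> R) : R :=
  rpow (sumR (map (fun alpha => rpow (Rabs (a alpha)) (2 * INR m / (INR m + 1)))
                  (multi_indices N m)))
       ((INR m + 1) / (2 * INR m)).

(* D is an admissible constant in the real polynomial Bohnenblust-Hille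
   inequality of degree m; D_{R,m} is the least such D. *)
Definition BH_admissible (m : nat) (D : R) : Prop :=
  forall (N : nat) (a : list nat -> R) (nrm : R),
    hpoly_norm_is N m a nrm -> BH_coef_norm N m a <= D * nrm.

Definition Bcoef (k j : nat) : R :=
  sumR (map (fun l =>
         if Nat.leb j (k + l) then
           INR (fact k) * (-3) ^ (j - 2 * l)
           / (INR (fact l) * INR (fact (j - 2 * l)) * INR (fact (k + l - j)))
         else 0)
       (seq 0 (S (Nat.div2 j)))).

Definition lower_bound (k : nat) : R :=
  rpow (sumR (map (fun j => rpow (Rabs (Bcoef k j)) (8 * INR k / (4 * INR k + 1)))
                  (seq 0 (S (2 * k)))))
       ((4 * INR k + 1) / (8 * INR k)).

(* Proof idea: test the inequality on the 4k-homogeneous polynomial in two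
   variables  P(x,y) = (x^4 + y^4 - 3 x^2 y^2)^k = f(x^2,y^2)^k  with
   f(X,Y) = X^2 + Y^2 - 3XY.
   - On [0,1]^2 one has |f| <= 1, and f(1,0) = 1, so ||P|| = 1.
   - Expanding f^k by the binomial theorem twice gives
       f(X,Y)^k = sum_{j=0}^{2k} B_j X^j Y^{2k-j},
     hence the coefficients of P are B_j on the monomials x^{2j} y^{4k-2j}
     and 0 on the monomials with an odd exponent of x.
   - The coefficient norm of P is therefore exactly lower_bound k, and the
   admissibility of D applied to P gives lower_bound k <= D * 1.
   The file first develops finite sums over {0,..,n-1}, then the description
   of 2-variable homogeneous polynomials, then the trinomial expansion, and
   finally the test polynomial and the theorem. *)

From Stdlib Require Import Reals List Arith Lia Lra.
Import ListNotations.
Open Scope R_scope.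

Definition fsum (n : nat) (f : nat -> R) : R := sumR (map f (seq 0 n)).

Lemma sumR_app (l1 l2 : list R) : sumR (l1 ++ l2) = sumR l1 + sumR l2.
Proof. induction l1 as [|a l1 IH]; simpl; [ring | rewrite IH; ring]. Qed.

Lemma fsum_S (n : nat) (f : nat -> R) : fsum (S n) f = fsum n f + f n.
Proof. unfold fsum. rewrite seq_S, map_app, sumR_app. simpl. ring. Qed.

Lemma fsum_ext (n : nat) (f g : nat -> R) :
  (forall i, (i < n)%nat -> f i = g i) -> fsum n f = fsum n g.
Proof.
  induction n as [|n IH]; intros H; [reflexivity|].
  rewrite !fsum_S, IH by (intros; apply H; lia).
  rewrite H by lia. reflexivity.
Qed.

Lemma fsum_zero (n : nat) (f : nat -> R) :
  (forall i, (i < n)%nat -> f i = 0) -> fsum n f = 0.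
Proof.
  induction n as [|n IH]; intros H; [reflexivity|].
  rewrite fsum_S, IH by (intros; apply H; lia).
  rewrite H by lia. ring.
Qed.

Lemma fsum_plus (n : nat) (f g : nat -> R) :
  fsum n (fun i => f i + g i) = fsum n f + fsum n g.
Proof. induction n as [|n IH]; [unfold fsum; simpl; ring | rewrite !fsum_S, IH; ring]. Qed.

Lemma fsum_scal_l (n : nat) (c : R) (f : nat -> R) :
  c * fsum n f = fsum n (fun i => c * f i).
Proof. induction n as [|n IH]; [unfold fsum; simpl; ring | rewrite !fsum_S, <- IH; ring]. Qed.

Lemma fsum_scal_r (n : nat) (c : R) (f : nat -> R) :
  fsum n f * c = fsum n (fun i => f i * c).
Proof. rewrite Rmult_comm, fsum_scal_l. apply fsum_ext; intros; ring. Qed.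

Lemma fsum_swap (n m : nat) (g : nat -> nat -> R) :
  fsum n (fun i => fsum m (g i)) = fsum m (fun j => fsum n (fun i => g i j)).
Proof.
  induction n as [|n IH].
  - symmetry. apply fsum_zero. reflexivity.
  - rewrite fsum_S, IH, <- fsum_plus. apply fsum_ext. intros. rewrite fsum_S. reflexivity.
Qed.

Lemma fsum_pad_zero (n m : nat) (f : nat -> R) :
  (forall i, (n <= i < n + m)%nat -> f i = 0) -> fsum (n + m) f = fsum n f.
Proof.
  induction m as [|m IH]; intros H; [rewrite Nat.add_0_r; reflexivity|].
  rewrite Nat.add_succ_r, fsum_S, IH by (intros; apply H; lia).
  rewrite H by lia. ring.
Qed.

Lemma fsum_shift (a n : nat) (g : nat -> R) :
  fsum (a + n) (fun j => if Nat.leb a j then g j else 0) = fsum n (fun b => g (a + b)%nat).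
Proof.
  induction n as [|n IH].
  - rewrite Nat.add_0_r. apply fsum_zero. intros i Hi.
    destruct (Nat.leb a i) eqn:E; [apply Nat.leb_le in E; lia | reflexivity].
  - rewrite Nat.add_succ_r, !fsum_S, IH.
    replace (Nat.leb a (a + n)) with true by (symmetry; apply Nat.leb_le; lia).
    reflexivity.
Qed.

(* Stdlib's sum_f_R0 f n has n+1 terms. *)
Lemma sum_f_R0_fsum (f : nat -> R) (n : nat) : sum_f_R0 f n = fsum (S n) f.
Proof.
  induction n as [|n IH]; [unfold fsum; simpl; ring|].
  simpl sum_f_R0. rewrite IH, (fsum_S (S n)). reflexivity.
Qed.

Lemma fsum_even_support (n : nat) (h : nat -> R) :
  (forall j, (j < n)%nat -> h (S (2 * j)) = 0) ->
  fsum (S (2 * n)) h = fsum (S n) (fun j => h (2 * j)%nat).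
Proof.
  induction n as [|n IH]; intros Hodd; [unfold fsum; simpl; ring|].
  replace (S (2 * S n)) with (S (S (S (2 * n)))) by lia.
  rewrite (fsum_S (S (S (2 * n)))), (fsum_S (S (2 * n))), IH by (intros; apply Hodd; lia).
  rewrite Hodd by lia. rewrite (fsum_S (S n)).
  replace (2 * S n)%nat with (S (S (2 * n))) by lia. ring.
Qed.

Lemma multi_indices_1_aux (n len st : nat) : (st + len = S n)%nat -> (0 < len)%nat ->
  flat_map (fun i => map (cons i) (multi_indices 0 (n - i))) (seq st len) = [[n]].
Proof.
  revert st. induction len as [|len IH]; intros st H1 H2; [lia|].
  simpl seq. simpl flat_map. destruct len.
  - replace st with n by lia. rewrite Nat.sub_diag. reflexivity.
  - replace (n - st)%nat with (S (n - S st)) by lia. apply IH; lia.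
Qed.

Lemma multi_indices_1 (n : nat) : multi_indices 1 n = [[n]].
Proof. apply multi_indices_1_aux; lia. Qed.

Lemma multi_indices_2 (m : nat) :
  multi_indices 2 m = map (fun i => [i; (m - i)%nat]) (seq 0 (S m)).
Proof.
  change (multi_indices 2 m) with
    (flat_map (fun i => map (cons i) (multi_indices 1 (m - i))) (seq 0 (S m))).
  induction (seq 0 (S m)) as [|i l IH]; [reflexivity|].
  cbn [flat_map map]. rewrite multi_indices_1. simpl. f_equal. exact IH.
Qed.

Lemma hpoly_eval_2 (m : nat) (a : list nat -> R) (x : nat -> R) :
  hpoly_eval 2 m a x =
  fsum (S m) (fun i => a [i; (m - i)%nat] * (x 0%nat ^ i * (x 1%nat ^ (m - i) * 1))).
Proof. unfold hpoly_eval, fsum. rewrite multi_indices_2, map_map. reflexivity. Qed.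

Lemma BH_coef_norm_2 (m : nat) (a : list nat -> R) :
  BH_coef_norm 2 m a =
  rpow (fsum (S m) (fun i => rpow (Rabs (a [i; (m - i)%nat])) (2 * INR m / (INR m + 1))))
       ((INR m + 1) / (2 * INR m)).
Proof. unfold BH_coef_norm, fsum. rewrite multi_indices_2, map_map. reflexivity. Qed.

Lemma hpoly_norm_attained (N m : nat) (a : list nat -> R) (M : R) (x0 : nat -> R) :
  (forall x, in_cube N x -> Rabs (hpoly_eval N m a x) <= M) ->
  in_cube N x0 -> Rabs (hpoly_eval N m a x0) = M ->
  hpoly_norm_is N m a M.
Proof.
  intros Hle Hx0 Hval. split.
  - intros v [x [Hx ->]]. exact (Hle x Hx).
  - intros b Hb. apply Hb. exists x0. split; [exact Hx0 | symmetry; exact Hval].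
Qed.

(* The term of index (l, j) in the double binomial expansion of
   (X^2 + (-3XY + Y^2))^k: it contributes to the monomial X^j Y^(2k-j)
   when 2l <= j <= k + l. *)
Definition trinomial_term (k : nat) (X Y : R) (l j : nat) : R :=
  if (Nat.leb (2 * l) j && Nat.leb j (k + l))%bool then
    INR (fact k) * (-3) ^ (j - 2 * l)
    / (INR (fact l) * INR (fact (j - 2 * l)) * INR (fact (k + l - j)))
    * X ^ j * Y ^ (2 * k - j)
  else 0.

Lemma div2_bounds (j : nat) : (2 * Nat.div2 j <= j < 2 * Nat.div2 j + 2)%nat.
Proof. pose proof (Nat.div2_odd j) as H. destruct (Nat.odd j); simpl in H; lia. Qed.

Lemma Bcoef_monomial (k j : nat) (X Y : R) : (j <= 2 * k)%nat ->
  Bcoef k j * X ^ j * Y ^ (2 * k - j) = fsum (S k) (fun l => trinomial_term k X Y l j).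
Proof.
  intros Hj. pose proof (div2_bounds j) as Hd.
  unfold Bcoef. fold (fsum (S (Nat.div2 j)) (fun l =>
    if Nat.leb j (k + l) then
      INR (fact k) * (-3) ^ (j - 2 * l)
      / (INR (fact l) * INR (fact (j - 2 * l)) * INR (fact (k + l - j)))
    else 0)).
  rewrite Rmult_assoc, fsum_scal_r.
  replace (S k) with (S (Nat.div2 j) + (k - Nat.div2 j))%nat by lia.
  rewrite fsum_pad_zero.
  - apply fsum_ext. intros l Hl. unfold trinomial_term.
    replace (Nat.leb (2 * l) j) with true by (symmetry; apply Nat.leb_le; lia).
    destruct (Nat.leb j (k + l)); simpl; ring.
  - intros l Hl. unfold trinomial_term.
    replace (Nat.leb (2 * l) j) with false by (symmetry; apply Nat.leb_gt; lia).
    reflexivity.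
Qed.

(* One term of the outer binomial expansion: the inner binomial expansion
   of (-3XY + Y^2)^(k-l), reindexed by the total X-degree j = 2l + b. *)
Lemma binomial_row (k l : nat) (X Y : R) : (l <= k)%nat ->
  C k l * (X ^ 2) ^ l
  * fsum (S (k - l)) (fun b => C (k - l) b * (-3 * X * Y) ^ b * (Y ^ 2) ^ (k - l - b))
  = fsum (S (2 * k)) (fun j => trinomial_term k X Y l j).
Proof.
  intros Hl.
  replace (S (2 * k)) with ((2 * l + S (k - l)) + (k - l))%nat by lia.
  rewrite fsum_pad_zero.
  2:{ intros j Hj. unfold trinomial_term.
      replace (Nat.leb j (k + l)) with false by (symmetry; apply Nat.leb_gt; lia).
      rewrite Bool.andb_false_r. reflexivity. }
  rewrite (fsum_ext _ (trinomial_term k X Y l) (fun j => if Nat.leb (2 * l) j then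
      INR (fact k) * (-3) ^ (j - 2 * l)
      / (INR (fact l) * INR (fact (j - 2 * l)) * INR (fact (k + l - j)))
      * X ^ j * Y ^ (2 * k - j) else 0)).
  2:{ intros j Hj. unfold trinomial_term.
      replace (Nat.leb j (k + l)) with true by (symmetry; apply Nat.leb_le; lia).
      rewrite Bool.andb_true_r. reflexivity. }
  rewrite fsum_shift, fsum_scal_l. apply fsum_ext. intros b Hb.
  replace (2 * l + b - 2 * l)%nat with b by lia.
  replace (k + l - (2 * l + b))%nat with (k - l - b)%nat by lia.
  replace (2 * k - (2 * l + b))%nat with (b + 2 * (k - l - b))%nat by lia.
  unfold C. rewrite !pow_add, !Rpow_mult_distr, <- !pow_mult.
  field. repeat split; apply INR_fact_neq_0.
Qed.

Lemma trinomial_expansion (k : nat) (X Y : R) :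
  (X ^ 2 + Y ^ 2 - 3 * X * Y) ^ k
  = fsum (S (2 * k)) (fun j => Bcoef k j * X ^ j * Y ^ (2 * k - j)).
Proof.
  replace (X ^ 2 + Y ^ 2 - 3 * X * Y) with (X ^ 2 + (-3 * X * Y + Y ^ 2)) by ring.
  rewrite binomial, sum_f_R0_fsum.
  rewrite (fsum_ext _ _ (fun l => fsum (S (2 * k)) (fun j => trinomial_term k X Y l j))).
  2:{ intros l Hl. rewrite binomial, sum_f_R0_fsum. apply binomial_row. lia. }
  rewrite fsum_swap. apply fsum_ext. intros j Hj. symmetry. apply Bcoef_monomial. lia.
Qed.

(* Coefficients of the test polynomial (x^4 + y^4 - 3x^2y^2)^k in the variables
   x = x_0, y = x_1: B_j on x^(2j) y^(4k-2j), and 0 on odd powers of x. *)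
Definition test_coef (k : nat) (alpha : list nat) : R :=
  match alpha with
  | [i; _] => if Nat.even i then Bcoef k (Nat.div2 i) else 0
  | _ => 0
  end.

Lemma test_coef_even (k j m : nat) : test_coef k [(2 * j)%nat; m] = Bcoef k j.
Proof. unfold test_coef. rewrite Nat.even_even, Nat.div2_double. reflexivity. Qed.

Lemma test_coef_odd (k j m : nat) : test_coef k [S (2 * j); m] = 0.
Proof. unfold test_coef. rewrite <- Nat.add_1_r, Nat.even_odd. reflexivity. Qed.

Lemma test_poly_eval (k : nat) (x : nat -> R) :
  hpoly_eval 2 (4 * k) (test_coef k) x
  = ((x 0%nat ^ 2) ^ 2 + (x 1%nat ^ 2) ^ 2 - 3 * (x 0%nat ^ 2) * (x 1%nat ^ 2)) ^ k.
Proof.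
  rewrite hpoly_eval_2, trinomial_expansion.
  replace (S (4 * k)) with (S (2 * (2 * k))) by lia.
  rewrite fsum_even_support by (intros; rewrite test_coef_odd; ring).
  apply fsum_ext. intros j Hj. rewrite test_coef_even, <- !pow_mult.
  replace (4 * k - 2 * j)%nat with (2 * (2 * k - j))%nat by lia. ring.
Qed.

Lemma test_poly_coef_norm (k : nat) : (1 <= k)%nat ->
  BH_coef_norm 2 (4 * k) (test_coef k) = lower_bound k.
Proof.
  intros hk. rewrite BH_coef_norm_2. unfold lower_bound.
  assert (Hk : 0 < INR k) by (apply lt_0_INR; lia).
  replace (INR (4 * k)) with (4 * INR k) by (rewrite mult_INR; simpl; ring).
  replace (2 * (4 * INR k) / (4 * INR k + 1)) with (8 * INR k / (4 * INR k + 1))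
    by (field; lra).
  replace (2 * (4 * INR k)) with (8 * INR k) by ring.
  f_equal.
  fold (fsum (S (2 * k)) (fun j => rpow (Rabs (Bcoef k j)) (8 * INR k / (4 * INR k + 1)))).
  replace (S (4 * k)) with (S (2 * (2 * k))) by lia.
  rewrite fsum_even_support.
  - apply fsum_ext. intros j Hj. rewrite test_coef_even. reflexivity.
  - intros j Hj. rewrite test_coef_odd, Rabs_R0. unfold rpow.
    destruct (Rle_dec 0 0); [reflexivity | lra].
Qed.

Lemma quadratic_form_bound (X Y : R) :
  0 <= X <= 1 -> 0 <= Y <= 1 -> Rabs (X ^ 2 + Y ^ 2 - 3 * X * Y) <= 1.
Proof.
  intros HX HY. apply Rabs_le. split.
  - assert (X * Y <= 1) by nra. pose proof (Rle_0_sqr (X - Y)). unfold Rsqr in *. nra.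
  - destruct (Rle_dec X Y); nra.
Qed.

Lemma test_poly_norm (k : nat) : hpoly_norm_is 2 (4 * k) (test_coef k) 1.
Proof.
  apply (hpoly_norm_attained _ _ _ _ (fun i => if Nat.eqb i 0 then 1 else 0)).
  - intros x Hx. rewrite test_poly_eval, <- RPow_abs, <- (pow1 k).
    apply pow_incr. split; [apply Rabs_pos|].
    destruct (Hx 0%nat) as [? ?]; [lia|]. destruct (Hx 1%nat) as [? ?]; [lia|].
    apply quadratic_form_bound; simpl; nra.
  - intros i Hi. destruct (Nat.eqb i 0); lra.
  - rewrite test_poly_eval. simpl.
    replace (1 * (1 * 1) * (1 * (1 * 1) * 1) + 0 * (0 * 1) * (0 * (0 * 1) * 1)
             - 3 * (1 * (1 * 1)) * (0 * (0 * 1))) with 1 by ring.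
    rewrite pow1. apply Rabs_R1.
Qed.

Theorem mainTheorem10 (k : nat) (hk : (1 <= k)%nat) (D : R) :
  BH_admissible (4 * k) D -> lower_bound k <= D.
Proof.
  intros HD.
  rewrite <- (test_poly_coef_norm k hk), <- (Rmult_1_r D).
  exact (HD 2%nat (test_coef k) 1 (test_poly_norm k)).
Qed.
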